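(* Let $\mathbf{F}$ be a field of characteristic $2$, $m\ge1$, and let $A,B\in\{0,1\}^m$ with $|A|\ge2$ and $|B|\ge2$. Put $I=A\cap B$, $J=A\setminus B$, $K=B\setminus A$. Then $$\mathrm{Tr}(A)\mathrm{Tr}(B)+\sum_{L<I}x^{I-L}N^L\,\mathrm{Tr}(I-L+J+K)+N^I\sum_{L<J}x^{J-L}\,\mathrm{Tr}(L+K)\in\ker(\pi).$$
   Context: Let $S=\mathbf{F}[x_1,y_1,\dots,x_m,y_m]$ with the $\mathbf{F}$-algebra automorphism $\sigma(x_i)=x_i$, $\sigma(y_i)=y_i+x_i$ of order 2, and let $S^{C_2}$ be the ring of $\sigma$-invariants. For $A=(a_1,\dots,a_m)\in\mathbb{N}^m$ write $x^A=\prod_s x_s^{a_s}$, $y^A=\prod_s y_s^{a_s}$, $N^A=\prod_s N_s^{a_s}$, and $|A|=\sum_s a_s$. $A\le B$ means componentwise $\le$; $L<A$ means $L\le A$, $L\ne A$; sums and differences of sequences are componentwise. Elements of $\{0,1\}^m$ are identified with subsets of $\{1,\dots,m\}$ (via characteristic vectors), and $\cap$, $\setminus$ are the corresponding set operations. $\Delta_s$ is the sequence with $1$ in position $s$ and $0$ elsewhere. For $A\in\{0,1\}^m$, $\mathrm{tr}(A)=y^A+\prod_s(y_s+x_s)^{a_s}\in S^{C_2}$. Let $R=\mathbf{F}[x_1,\dots,x_m,N_1,\dots,N_m]$ be a polynomial ring in $2m$ indeterminates and $Q=R[\mathrm{Tr}(A): A\in\{0,1\}^m,|A|\ge2]$ a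 polynomial ring over $R$. Let $\pi:Q\to S^{C_2}$ be the $\mathbf{F}$-algebra homomorphism with $\pi(x_i)=x_i$, $\pi(N_i)=y_i^2+x_iy_i$, $\pi(\mathrm{Tr}(A))=\mathrm{tr}(A)$. Convention: for $C\in\{0,1\}^m$ with $|C|\le1$, $\mathrm{Tr}(0)=0$ and $\mathrm{Tr}(\Delta_s)=x_s$ in $Q$ (so $\pi(\mathrm{Tr}(C))=\mathrm{tr}(C)$ for all $C$). *)

From mathcomp Require Import all_boot all_order all_algebra.
From mathcomp Require Export mpoly.
Set Implicit Arguments. Unset Strict Implicit. Unset Printing Implicit Defensive.
Import GRing.Theory.
Local Open Scope ring_scope.

(* Elements of {0,1}^m are represented as subsets {set 'I_m}. *)

Section Defs.
Variables (F : fieldType) (m : nat).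

Definition Sring := {mpoly F[m + m]}.
Definition xS (i : 'I_m) : Sring := 'X_(lshift m i).
Definition yS (i : 'I_m) : Sring := 'X_(rshift m i).

Definition trS (A : {set 'I_m}) : Sring :=
  \prod_(s in A) yS s + \prod_(s in A) (yS s + xS s).

(* Q: polynomial ring over F in the variables x_i, N_i (i < m) and Tr(A)
   indexed by all subsets A (only those with |A| >= 2 are used as Tr(A)). *)
Definition nQ := (m + m + #|{set 'I_m}|)%N.
Definition Qring := {mpoly F[nQ]}.
Definition xQ (i : 'I_m) : Qring := 'X_(lshift #|{set 'I_m}| (lshift m i)).
Definition NQ (i : 'I_m) : Qring := 'X_(lshift #|{set 'I_m}| (rshift m i)).
Definition TrVar (A : {set 'I_m}) : Qring := 'X_(rshift (m + m) (enum_rank A)).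

(* Tr(C) with the convention Tr(0) = 0, Tr(Delta_s) = x_s. *)
Definition TrQ (C : {set 'I_m}) : Qring :=
  if (2 <= #|C|)%N then TrVar C
  else match [pick s in C] with Some s => xQ s | None => 0 end.

Definition pi_gen (k : 'I_nQ) : Sring :=
  match split k with
  | inl k' => match split k' with
              | inl i => xS i
              | inr i => yS i ^+ 2 + xS i * yS i
              end
  | inr a => trS (enum_val a)
  end.

(* pi : Q -> S^{C_2} (viewed inside S), the F-algebra homomorphism *)
Definition piQ (p : Qring) : Sring := mmap (fun c : F => c%:MP) pi_gen p.

Definition xpow (A : {set 'I_m}) : Qring := \prod_(s in A) xQ s.
Definition Npow (A : {set 'I_m}) : Qring := \prod_(s in A) NQ s.

End Defs.

(* Under pi put a_s = y_s and b_s = y_s + x_s. In characteristic 2 this gives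
   x_s = a_s + b_s, N_s = a_s b_s and tr(C) = a^C + b^C for every C, including
   |C| <= 1. Expanding over subsets, the full sum over L <= I of
   x^(I-L) N^L a^(I-L) is prod_(s in I) (x_s a_s + N_s) = a^(2I), and likewise
   for b, while the full sum over L <= J of x^(J-L) tr(L + K) collapses to
   b^J a^K + a^J b^K. Removing the terms L = I and L = J, which cancel each
   other, every remaining monomial occurs exactly twice. *)

From HB Require Import structures.
From mathcomp Require Import all_boot all_order all_algebra.
From mathcomp Require Import mpoly ring.
Import GRing.Theory.
Local Open Scope ring_scope.

Section SubsetSums.
Variables (R : comPzRingType) (T : finType).

Lemma prod_setU (X Y : {set T}) (f : T -> R) : [disjoint X & Y] ->
  \prod_(s in X :|: Y) f s = \prod_(s in X) f s * \prod_(s in Y) f s.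
Proof. by move=> dXY; rewrite -bigU //; apply: eq_bigl => s; rewrite !inE. Qed.

Lemma prod_addr_subsets (I : {set T}) (f g : T -> R) :
  \prod_(s in I) (f s + g s)
  = \sum_(L : {set T} | L \subset I) \prod_(s in I :\: L) f s * \prod_(s in L) g s.
Proof.
pose g' s := if s \in I then g s else 0.
pose f' s := if s \in I then f s else 1.
have -> : \prod_(s in I) (f s + g s) = \prod_s (g' s + f' s).
  rewrite big_mkcond; apply: eq_bigr => s _.
  by rewrite /g' /f'; case: ifP; rewrite ?add0r // addrC.
rewrite bigA_distr (bigID (fun L : {set T} => L \subset I)) /=.
rewrite [X in _ + X]big1 ?addr0 => [|L /subsetPn[s sL sNI]]; last first.
  by rewrite (bigD1 s) //= sL /g' (negbTE sNI) mul0r.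
apply: eq_bigr => L LI; rewrite [in RHS]big_mkcond [X in _ * X]big_mkcond -big_split.
apply: eq_bigr => s _; rewrite /g' /f' !inE.
case sL: (s \in L); first by rewrite (subsetP LI s sL) /= mul1r.
by case: (s \in I); rewrite /= mulr1.
Qed.

Lemma sum_proper_subsets (I : {set T}) (F : {set T} -> R) :
  \sum_(L : {set T} | L \proper I) F L = \sum_(L : {set T} | L \subset I) F L - F I.
Proof.
rewrite [in RHS](bigD1 I) //= [RHS]addrC addKr.
by apply: eq_bigl => L; rewrite properEneq andbC.
Qed.

End SubsetSums.

Lemma venn_disjoint {T : finType} (A B : {set T}) :
  [/\ [disjoint A :&: B & A :\: B], [disjoint A :&: B & B :\: A]
    & [disjoint A :\: B & B :\: A]].
Proof.
by split; apply/pred0P => s /=; rewrite !inE; case: (s \in A); case: (s \in B).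
Qed.

Section CharTwo.
Variables (R : comNzRingType) (T : finType) (a b x N : T -> R).
Hypotheses (char2 : 2 \in [pchar R])
  (xE : forall s, x s = a s + b s) (NE : forall s, N s = a s * b s).

Local Notation tr C := (\prod_(s in C) a s + \prod_(s in C) b s).

Lemma tr_setU (X Y : {set T}) : [disjoint X & Y] ->
  tr (X :|: Y) = \prod_(s in X) a s * \prod_(s in Y) a s
               + \prod_(s in X) b s * \prod_(s in Y) b s.
Proof. by move=> dXY; rewrite !prod_setU. Qed.

Lemma sum_subsets_tr_setDU (I D : {set T}) : [disjoint I & D] ->
  \sum_(L : {set T} | L \subset I)
      \prod_(s in I :\: L) x s * \prod_(s in L) N s * tr ((I :\: L) :|: D)
  = (\prod_(s in I) a s) ^+ 2 * \prod_(s in D) a s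
  + (\prod_(s in I) b s) ^+ 2 * \prod_(s in D) b s.
Proof.
move=> dID.
have expand_tr (L : {set T}) : L \subset I ->
    \prod_(s in I :\: L) x s * \prod_(s in L) N s * tr ((I :\: L) :|: D)
  = \prod_(s in I :\: L) (x s * a s) * \prod_(s in L) N s * \prod_(s in D) a s
  + \prod_(s in I :\: L) (x s * b s) * \prod_(s in L) N s * \prod_(s in D) b s.
  by move=> _; rewrite tr_setU ?(disjointWl (subsetDl I L)) // !big_split /=; ring.
rewrite (eq_bigr _ expand_tr) big_split /= -!mulr_suml -!prod_addr_subsets -!prodrXl.
congr (_ * _ + _ * _); apply: eq_bigr => s _; rewrite xE NE expr2 mulrDl.
  by rewrite [b s * _]mulrC -addrA (addrr_pchar2 char2) addr0.
by rewrite [a s * b s]mulrC addrAC (addrr_pchar2 char2) add0r.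
Qed.

Lemma sum_subsets_tr_setU (J K : {set T}) : [disjoint J & K] ->
  \sum_(L : {set T} | L \subset J) \prod_(s in J :\: L) x s * tr (L :|: K)
  = \prod_(s in J) b s * \prod_(s in K) a s + \prod_(s in J) a s * \prod_(s in K) b s.
Proof.
move=> dJK.
have expand_tr (L : {set T}) : L \subset J ->
    \prod_(s in J :\: L) x s * tr (L :|: K)
  = \prod_(s in J :\: L) x s * \prod_(s in L) a s * \prod_(s in K) a s
  + \prod_(s in J :\: L) x s * \prod_(s in L) b s * \prod_(s in K) b s.
  by move=> LJ; rewrite tr_setU ?(disjointWl LJ) //; ring.
rewrite (eq_bigr _ expand_tr) big_split /= -!mulr_suml -!prod_addr_subsets.
congr (_ * _ + _ * _); apply: eq_bigr => s _; rewrite xE.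
  by rewrite addrC addKr_pchar2.
by rewrite addrK_pchar2.
Qed.

Lemma tr_mul_expansion (I J K : {set T}) :
    [disjoint I & J] -> [disjoint I & K] -> [disjoint J & K] ->
  tr (I :|: J) * tr (I :|: K)
  + \sum_(L : {set T} | L \proper I)
      \prod_(s in I :\: L) x s * \prod_(s in L) N s * tr ((I :\: L) :|: J :|: K)
  + \prod_(s in I) N s * \sum_(L : {set T} | L \proper J)
      \prod_(s in J :\: L) x s * tr (L :|: K) = 0.
Proof.
move=> dIJ dIK dJK.
have dI_JK : [disjoint I & J :|: K].
  by rewrite -setI_eq0 setIUr !disjoint_setI0 ?setU0.
rewrite !sum_proper_subsets.
under [\sum_(L : {set T} | L \subset I) _]eq_bigr => L _ do rewrite -setUA.
rewrite sum_subsets_tr_setDU // sum_subsets_tr_setU // !setDv set0U !big_set0 !mul1r.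
have -> : \prod_(s in I) N s = \prod_(s in I) a s * \prod_(s in I) b s.
  by rewrite -big_split; apply: eq_bigr => s _; apply: NE.
rewrite !tr_setU ?prod_setU //.
set pI := \prod_(s in I) a s; set qI := \prod_(s in I) b s.
set pJ := \prod_(s in J) a s; set qJ := \prod_(s in J) b s.
set pK := \prod_(s in K) a s; set qK := \prod_(s in K) b s.
(* Every monomial that survives occurs exactly twice. *)
rewrite -[RHS](mulr0 (pI ^+ 2 * pJ * pK + qI ^+ 2 * qJ * qK
  + pI * qI * (pJ * qK + qJ * pK) - pI * qI * (pJ * pK + qJ * qK))).
rewrite -(addrr_pchar2 char2 1); ring.
Qed.

End CharTwo.

Section Projection.
Variables (F : fieldType) (m : nat).
Hypothesis char2 : 2 \in [pchar F].

HB.instance Definition _ :=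
  GRing.RMorphism.copy (@piQ F m) (mmap (fun c : F => c%:MP) (@pi_gen F m)).

Lemma pchar2_Sring : 2 \in [pchar Sring F m].
Proof. by rewrite pchar_lalg. Qed.

Lemma piQ_X (k : 'I_(nQ m)) : piQ 'X_k = pi_gen F k.
Proof. by rewrite /piQ mmapX mmap1U. Qed.

Lemma piQ_xQ (i : 'I_m) : piQ (xQ F i) = xS F i.
Proof. by rewrite piQ_X /pi_gen !(unsplitK (inl _ _)). Qed.

Lemma piQ_NQ (i : 'I_m) : piQ (NQ F i) = yS F i ^+ 2 + xS F i * yS F i.
Proof. by rewrite piQ_X /pi_gen (unsplitK (inl _ _)) (unsplitK (inr _ _)). Qed.

Lemma piQ_xpow (L : {set 'I_m}) : piQ (xpow F L) = \prod_(s in L) xS F s.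
Proof. by rewrite /xpow rmorph_prod; apply: eq_bigr => s _; apply: piQ_xQ. Qed.

Lemma piQ_Npow (L : {set 'I_m}) :
  piQ (Npow F L) = \prod_(s in L) (yS F s ^+ 2 + xS F s * yS F s).
Proof. by rewrite /Npow rmorph_prod; apply: eq_bigr => s _; apply: piQ_NQ. Qed.

Lemma piQ_TrQ (C : {set 'I_m}) : piQ (TrQ F C) = trS F C.
Proof.
have two0 := addrr_pchar2 pchar2_Sring.
rewrite /TrQ; case: ifP => C_ge2.
  by rewrite piQ_X /pi_gen (unsplitK (inr _ _)) enum_rankK.
case: pickP => [s sC | C0].
  have -> : C = [set s].
    apply/eqP; rewrite eq_sym eqEcard sub1set sC cards1.
    by move: C_ge2; case: #|C| => [|[|]].
  by rewrite piQ_xQ /trS !big_set1 addrA two0 add0r.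
have -> : C = set0 by apply/setP => s; rewrite inE C0.
by rewrite /trS !big_set0 two0 rmorph0.
Qed.

End Projection.

Theorem mainTheorem3 (F : fieldType) (m : nat) (A B : {set 'I_m}) :
  (2 \in [pchar F])%N -> (0 < m)%N ->
  (2 <= #|A|)%N -> (2 <= #|B|)%N ->
  let I := A :&: B in
  let J := A :\: B in
  let K := B :\: A in
  piQ (TrQ F A * TrQ F B
       + \sum_(L : {set 'I_m} | L \proper I)
           xpow F (I :\: L) * Npow F L * TrQ F ((I :\: L) :|: J :|: K)
       + Npow F I * \sum_(L : {set 'I_m} | L \proper J)
           xpow F (J :\: L) * TrQ F (L :|: K)) = 0.
Proof.
move=> char2 _ _ _ I J K.
have [dIJ dIK dJK] := venn_disjoint A B.
have -> : A = I :|: J by rewrite setID.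
have -> : B = I :|: K by rewrite /I setIC setID.
(* [/=] turns the instance of the morphism structure back into [piQ]. *)
rewrite !rmorphD !rmorphM !rmorph_sum /= piQ_Npow !piQ_TrQ //.
under eq_bigr do rewrite !rmorphM /= piQ_xpow piQ_Npow piQ_TrQ //.
under [\sum_(L : {set _} | L \proper J) _]eq_bigr do rewrite rmorphM /= piQ_xpow piQ_TrQ //.
have char2S := @pchar2_Sring F m char2.
apply: (@tr_mul_expansion _ _ (@yS F m) (fun s => yS F s + xS F s) (@xS F m) _ char2S)
  => // s.
- by rewrite addKr_pchar2.
- by rewrite mulrDr -expr2 [xS F s * _]mulrC.
Qed.
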